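(* For a ring $R$, the following conditions are equivalent: (1) $R$ is strongly $n$-torsion clean for some $n\in\mathbb{N}$; (2) $R$ is strongly clean and the unit group $U(R)$ has finite exponent.
   Context: All rings are associative with identity. A ring is strongly clean if every element is a sum $e+u$ of an idempotent $e$ and a unit $u$ with $eu=ue$. A ring $R$ is strongly $n$-torsion clean if every $r\in R$ can be written $r=e+u$ with $e^2=e$, $u\in U(R)$, $u^n=1$ and $eu=ue$, and $n$ is the smallest natural number with this property. *)

From HB Require Import structures.
From mathcomp Require Import all_boot all_order all_algebra.
Set Implicit Arguments. Unset Strict Implicit. Unset Printing Implicit Defensive.
Import GRing.Theory.
Local Open Scope ring_scope.

Definition strongly_clean (R : unitRingType) : Prop :=
  forall r : R, exists e u : R,
    [/\ e * e = e, u \is a GRing.unit, e * u = u * e & r = e + u].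

Definition strongly_torsion_clean_with (R : unitRingType) (n : nat) : Prop :=
  forall r : R, exists e u : R,
    [/\ e * e = e, u \is a GRing.unit, u ^+ n = 1, e * u = u * e & r = e + u].

Definition strongly_n_torsion_clean (R : unitRingType) (n : nat) : Prop :=
  [/\ (0 < n)%N, strongly_torsion_clean_with R n &
      forall m : nat, (0 < m)%N -> strongly_torsion_clean_with R m -> (n <= m)%N].

Definition units_finite_exponent (R : unitRingType) : Prop :=
  exists k : nat, (0 < k)%N /\ forall u : R, u \is a GRing.unit -> u ^+ k = 1.

From mathcomp Require Import all_boot all_order all_algebra.
From Stdlib Require Import Classical Wf_nat.
Set Implicit Arguments.
Unset Strict Implicit.
Unset Printing Implicit Defensive.

Import GRing.Theory.
Local Open Scope ring_scope.

(* If r = e + v with e idempotent, v ^ n = 1 and ev = ve, then (1 - e)(r ^ n - 1) = 0 and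
   e((r - 1) ^ n - 1) = 0, so r is a root of the monic integer polynomial
   P = (X ^ n - 1)((X - 1) ^ n - 1) of degree 2n.  Taking r = 3 shows that R has positive
   characteristic dividing N = (3 ^ n - 1)(2 ^ n - 1).  For a unit u, reducing X ^ k modulo P
   and the coefficients modulo N puts every power of u among the N ^ 2n combinations
   sum_(i < 2n) c_i u ^ i with 0 <= c_i < N; by pigeonhole u ^ m = 1 for some
   0 < m <= N ^ 2n, hence u ^ (N ^ 2n)! = 1.  Conversely a uniform exponent k of U(R)
   makes a strongly clean ring strongly k-torsion clean, and the least such k works. *)

Section IdempotentSplitting.

Variable R : pzRingType.
Implicit Types e f v x y : R.

Lemma expr_idem e n : e * e = e -> (0 < n)%N -> e ^+ n = e.
Proof.
move=> ee; elim: n => // -[|n] IHn _; first exact: expr1.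
by rewrite exprS IHn.
Qed.

Lemma idem_mulrX f x y n : f * f = f -> GRing.comm f x -> GRing.comm f y ->
  f * x = f * y -> (0 < n)%N -> f * x ^+ n = f * y ^+ n.
Proof.
move=> ff fx fy fxy n0.
rewrite -[f in LHS](expr_idem ff n0) -[f in RHS](expr_idem ff n0).
by rewrite -!exprMn_comm // fxy.
Qed.

Lemma torsion_clean_root e v n : e * e = e -> e * v = v * e -> v ^+ n = 1 ->
  (0 < n)%N -> ((e + v) ^+ n - 1) * ((e + v - 1) ^+ n - 1) = 0.
Proof.
move=> ee ev vn n0; set a := e + v.
have ff : (1 - e) * (1 - e) = 1 - e.
  by rewrite mulrBr mulr1 mulrBl mul1r ee subrr subr0.
have ea : GRing.comm e a by apply: commrD.
have fv : GRing.comm (1 - e) v by rewrite /GRing.comm mulrBl mulrBr mul1r mulr1 ev.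
have fa : GRing.comm (1 - e) a by rewrite /GRing.comm mulrBl mulrBr mul1r mulr1 ea.
have annih_1e : (1 - e) * (a ^+ n - 1) = 0.
  rewrite mulrBr mulr1 (idem_mulrX ff fa fv) ?vn ?mulr1 ?subrr //.
  by rewrite /a mulrDr mulrBl mul1r ee subrr add0r.
have annih_e : e * ((a - 1) ^+ n - 1) = 0.
  have ea1 : GRing.comm e (a - 1) by apply: commrB => //; apply: commr1.
  rewrite mulrBr mulr1 (idem_mulrX ee ea1 ev) ?vn ?mulr1 ?subrr //.
  by rewrite /a mulrBr mulrDr ee mulr1 addrAC subrr add0r.
have -> : a ^+ n - 1 = e * (a ^+ n - 1).
  by apply/eqP; rewrite -subr_eq0 -{1}[a ^+ n - 1]mul1r -mulrBl annih_1e.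
have eX : GRing.comm e (a ^+ n - 1) by apply: commrB; [apply: commrX | apply: commr1].
by rewrite eX -mulrA annih_e mulr0.
Qed.

End IdempotentSplitting.

Lemma torsion_clean_natr_eq0 (R : unitRingType) n : (0 < n)%N ->
  strongly_torsion_clean_with R n -> ((3 ^ n - 1) * (2 ^ n - 1))%:R = 0 :> R.
Proof.
move=> n0 /(_ 3%:R) [e [v [ee _ vn ev three]]].
have := torsion_clean_root ee ev vn n0; rewrite -three.
have -> : 3%:R - 1 = 2%:R :> R by rewrite -natr1 addrK.
by rewrite natrM !natrB ?expn_gt0 // !natrX.
Qed.

Lemma commr_intr {R : nzRingType} (u : R) : commr_rmorph (intr : int -> R) u.
Proof. exact: commr_int. Qed.

Section PowersModuloMonic.

Variables (R : nzRingType) (N : nat) (P : {poly int}) (u : R).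
Hypotheses (N_gt0 : (0 < N)%N) (charN : N%:R = 0 :> R) (monicP : P \is monic).

Let N_neq0 : N%:Z != 0. Proof. by rewrite eqz_nat -lt0n. Qed.

Hypothesis rootP : horner_morph (commr_intr u) P = 0.

Lemma natr_absz_modz (z : int) : (`|(z %% N)%Z|%N)%:R = z%:~R :> R.
Proof.
rewrite [in RHS](divz_eq z N) intrD intrM [LHS]pmulrn gez0_abs ?modz_ge0 //.
by rewrite -pmulrn charN mulr0 add0r.
Qed.

Lemma absz_modz_lt (z : int) : (`|(z %% N)%Z|%N < N)%N.
Proof.
by rewrite -ltz_nat gez0_abs ?modz_ge0 // ltz_mod.
Qed.

Definition nat_combinations d : seq R :=
  [seq \sum_(i < d) (c i : nat)%:R * u ^+ i | c : {ffun 'I_d -> 'I_N}].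

Lemma size_nat_combinations d : size (nat_combinations d) = (N ^ d)%N.
Proof. by rewrite size_map -cardE card_ffun !card_ord. Qed.

Lemma expr_in_nat_combinations k : u ^+ k \in nat_combinations (size P).-1.
Proof.
set r := 'X^k %% P.
have ukr : u ^+ k = horner_morph (commr_intr u) r.
  have -> : u ^+ k = horner_morph (commr_intr u) 'X^k.
    by rewrite rmorphXn /= horner_morphX.
  rewrite {1}(Pdiv.IdomainMonic.divp_eq monicP 'X^k).
  by rewrite rmorphD rmorphM /= rootP mulr0 add0r.
have size_r : (size (map_poly (intr : int -> R) r) <= (size P).-1)%N.
  have P_neq0 : P != 0 by exact: monic_neq0.
  apply: leq_trans (size_poly _ _) _.
  by rewrite -ltnS prednK ?size_poly_gt0 // ltn_modpN0.
apply/imageP; exists [ffun i : 'I_(size P).-1 => Ordinal (absz_modz_lt r`_i)]; first by [].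
rewrite ukr /horner_morph (horner_coef_wide _ size_r).
by apply: eq_bigr => i _; rewrite ffunE /= natr_absz_modz coef_map.
Qed.

End PowersModuloMonic.

Lemma unitr_expr_size_fact_eq1 (R : unitRingType) (s : seq R) (u : R) :
  u \is a GRing.unit -> (forall k, u ^+ k \in s) -> u ^+ (size s)`! = 1.
Proof.
move=> uU us; pose t := mkseq (GRing.exp u) (size s).+1.
have /(uniqPn 0) [i [j [lt_ij lt_jt eq_uij]]] : ~~ uniq t.
  apply/negP => /uniq_leq_size le_ts.
  have : (size t <= size s)%N by apply: le_ts => _ /mapP [k _ ->].
  by rewrite size_mkseq ltnn.
rewrite /t size_mkseq in lt_jt eq_uij.
rewrite !nth_mkseq ?(ltn_trans lt_ij lt_jt) // in eq_uij.
have uji : u ^+ (j - i) = 1.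
  by apply: (mulrI (unitrX i uU)); rewrite mulr1 -exprD subnKC ?(ltnW lt_ij).
have /dvdn_fact/dvdnP [q ->] : (0 < j - i <= size s)%N.
  by rewrite subn_gt0 lt_ij (leq_trans (leq_subr i j)).
by rewrite mulnC exprM uji expr1n.
Qed.

Lemma monic_XsubC_exp_sub1 (R : nzRingType) (c : R) n : (0 < n)%N ->
  ('X - c%:P) ^+ n - 1 \is monic.
Proof.
move=> n0; rewrite monicE lead_coefDl -?monicE ?monic_exp ?monicXsubC //.
by rewrite size_polyN size_poly1 size_exp_XsubC ltnS.
Qed.

Lemma strongly_torsion_clean_units_exponent (R : unitRingType) n : (0 < n)%N ->
  strongly_torsion_clean_with R n -> units_finite_exponent R.
Proof.
move=> n0 tc; set N := ((3 ^ n - 1) * (2 ^ n - 1))%N.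
have N_gt0 : (0 < N)%N.
  have exp_gt1 m : (1 < m)%N -> (1 < m ^ n)%N.
    by move=> m_gt1; apply: leq_ltn_trans n0 (ltn_expl n m_gt1).
  by rewrite muln_gt0 !subn_gt0 !exp_gt1.
pose P : {poly int} := ('X^n - 1%:P) * (('X - 1%:P) ^+ n - 1).
have monicP : P \is monic by rewrite monicMl ?monicXnsubC ?monic_XsubC_exp_sub1.
exists (N ^ (size P).-1)`!; split; first exact: fact_gt0.
move=> u uU; have [e [v [ee _ vn ev uev]]] := tc u.
rewrite -(size_nat_combinations N u); apply: unitr_expr_size_fact_eq1 => // k.
apply: expr_in_nat_combinations => //; first exact: torsion_clean_natr_eq0.
rewrite /P polyC1 rmorphM /= !rmorphB /= !rmorphXn /= rmorphB /= rmorph1 horner_morphX.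
by rewrite uev torsion_clean_root.
Qed.

Lemma strongly_torsion_clean_with_clean (R : unitRingType) n :
  strongly_torsion_clean_with R n -> strongly_clean R.
Proof. by move=> tc r; have [e [u [? ? _ ? ?]]] := tc r; exists e, u. Qed.

Lemma strongly_clean_torsion_clean_with (R : unitRingType) k :
  strongly_clean R -> (forall u : R, u \is a GRing.unit -> u ^+ k = 1) ->
  strongly_torsion_clean_with R k.
Proof.
by move=> clean expk r; have [e [u [? uU ? ?]]] := clean r; exists e, u; rewrite expk.
Qed.

Lemma ex_minimal_nat (P : nat -> Prop) :
  (exists n, P n) -> exists n, P n /\ forall m, P m -> (n <= m)%N.
Proof.
move=> exP; have [n [[Pn min_n] _]] :=
  dec_inh_nat_subset_has_unique_least_element P (fun n => classic (P n)) exP.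
by exists n; split=> // m /min_n /leP.
Qed.

Theorem theorem2p14 (R : unitRingType) :
  (exists n : nat, strongly_n_torsion_clean R n) <->
  (strongly_clean R /\ units_finite_exponent R).
Proof.
split=> [[n [n0 tc _]] | [clean [k [k0 expk]]]].
  split; first exact: strongly_torsion_clean_with_clean tc.
  exact: strongly_torsion_clean_units_exponent n0 tc.
have [|n [[n0 tc] min_n]] :=
  @ex_minimal_nat (fun m => (0 < m)%N /\ strongly_torsion_clean_with R m).
  by exists k; split; last exact: strongly_clean_torsion_clean_with.
by exists n; split=> // m m0 tcm; apply: min_n.
Qed.
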